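(* Let $n\ge 2$, fix $\boldsymbol{\rho}^0\in\mathcal{P}_n$ and $\alpha\in(0,\infty)$, and let $\mathbf{R}=(R_1,\dots,R_n)\sim\mathrm{Mallows}(\boldsymbol{\rho}^0,\alpha)$ with the footrule distance. For $i=1,\dots,n$ let $o^0_i$ be the item with $\rho^0_{o^0_i}=i$. Then for every $j\in\{1,\dots,n-1\}$, $$\mathbb{E}[R_{o^0_j}\mid \boldsymbol{\rho}^0,\alpha] < \mathbb{E}[R_{o^0_{j+1}}\mid \boldsymbol{\rho}^0,\alpha].$$
   Context: $\mathcal{P}_n$ denotes the set of permutations of $\{1,\dots,n\}$; a ranking $\mathbf{r}\in\mathcal{P}_n$ assigns rank $r_i$ to item $i$. The footrule distance is $d(\mathbf{r},\boldsymbol{\rho})=\sum_{i=1}^n|r_i-\rho_i|$. The Mallows distribution $\mathrm{Mallows}(\boldsymbol{\rho}^0,\alpha)$ on $\mathcal{P}_n$ has probability mass function $P(\mathbf{R}=\mathbf{r}\mid\boldsymbol{\rho}^0,\alpha)=\frac{1}{Z_n(\alpha)}\exp\{-\frac{\alpha}{n}d(\mathbf{r},\boldsymbol{\rho}^0)\}$, where $Z_n(\alpha)=\sum_{\mathbf{r}\in\mathcal{P}_n}\exp\{-\frac{\alpha}{n}d(\mathbf{r},\boldsymbol{\rho}^0)\}$ (which does not depend on $\boldsymbol{\rho}^0$). *)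

From HB Require Import structures.
From mathcomp Require Import all_boot all_order all_algebra all_fingroup.
From mathcomp Require Import all_classical all_reals all_analysis.
Set Implicit Arguments. Unset Strict Implicit. Unset Printing Implicit Defensive.
Import Order.TTheory GRing.Theory Num.Theory.
Local Open Scope ring_scope.

(* Rankings of n items: permutations of 'I_n.  Items and ranks are 0-based
   ('I_n); the paper's rank r_i in {1..n} is (r i).+1. *)

Definition distn (a b : nat) : nat := ((a - b) + (b - a))%N.

Definition footrule (n : nat) (r rho : {perm 'I_n}) : nat :=
  (\sum_(i < n) distn (r i).+1 (rho i).+1)%N.

Definition mallows_weight (R : realType) (n : nat) (rho0 : {perm 'I_n})
  (alpha : R) (r : {perm 'I_n}) : R :=
  expR (- (alpha / n%:R) * (footrule r rho0)%:R).

Definition mallows_Z (R : realType) (n : nat) (rho0 : {perm 'I_n}) (alpha : R) : R :=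
  \sum_(r : {perm 'I_n}) mallows_weight rho0 alpha r.

Definition mallows_pmf (R : realType) (n : nat) (rho0 : {perm 'I_n}) (alpha : R)
  (r : {perm 'I_n}) : R :=
  mallows_weight rho0 alpha r / mallows_Z rho0 alpha.

Definition expected_rank (R : realType) (n : nat) (rho0 : {perm 'I_n}) (alpha : R)
  (item : 'I_n) : R :=
  \sum_(r : {perm 'I_n}) ((r item).+1)%:R * mallows_pmf rho0 alpha r.

Definition item_of_rank (n : nat) (rho0 : {perm 'I_n}) (i : 'I_n) : 'I_n :=
  (rho0^-1)%g i.

From HB Require Import structures.
From mathcomp Require Import all_boot all_order all_algebra all_fingroup.
From mathcomp Require Import all_classical all_reals all_analysis.
From mathcomp Require Import zify.
Import Order.TTheory GRing.Theory Num.Theory.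
Local Open Scope ring_scope.

(* For items a, b with rho0 a < rho0 b, let t be the transposition of a and b,
   so that r |-> t r swaps the ranks of a and b.  Pairing r with t r gives
     2 (E[R_b] - E[R_a]) = sum_r (r_b - r_a) (P(r) - P(t r)).
   By the rearrangement inequality |x - p| + |y - q| <= |y - p| + |x - q|
   (p <= q, x <= y), whichever of r and t r orders a and b as rho0 does is
   closer to rho0 in footrule, hence more likely, so every term is
   nonnegative; the term r = rho0 is positive since d(rho0, rho0) = 0. *)

Lemma distn_rearrange (x y p q : nat) : (p <= q)%N -> (x <= y)%N ->
  (distn x p + distn y q <= distn y p + distn x q)%N.
Proof. rewrite /distn; lia. Qed.

Section Footrule.

Context {n : nat}.
Implicit Types (r rho : {perm 'I_n}) (a b : 'I_n).

Lemma footrule_tpermM r rho {a b} : a != b ->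
  (footrule (tperm a b * r)%g rho + distn (r a).+1 (rho a).+1
     + distn (r b).+1 (rho b).+1 =
   footrule r rho + distn (r b).+1 (rho a).+1 + distn (r a).+1 (rho b).+1)%N.
Proof.
move=> ab; rewrite /footrule (bigD1 a) //= (bigD1 b) 1?eq_sym //=.
rewrite [in RHS](bigD1 a) //= [in RHS](bigD1 b) 1?eq_sym //=.
rewrite !permM tpermL tpermR.
rewrite (eq_bigr (fun i => distn (r i).+1 (rho i).+1)); last first.
  by move=> i /andP[ia ib]; rewrite permM tpermD // eq_sym.
set rest := (\sum_(i | _) _)%N; lia.
Qed.

Lemma footrule_tpermM_sorted r rho a b :
  (rho a <= rho b)%N -> (r a <= r b)%N ->
  (footrule r rho <= footrule (tperm a b * r)%g rho)%N.
Proof.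
move=> le_rho le_r; have [<-|ab] := eqVneq a b; first by rewrite tperm1 mul1g.
have := footrule_tpermM r rho ab.
have := @distn_rearrange (r a).+1 (r b).+1 (rho a).+1 (rho b).+1 le_rho le_r.
lia.
Qed.

Lemma footrulexx r : footrule r r = 0%N.
Proof. by apply: big1 => i _; rewrite /distn subnn. Qed.

Lemma footrule_tpermM_gt0 r {a b} :
  a != b -> (0 < footrule (tperm a b * r)%g r)%N.
Proof.
move=> ab; have := footrule_tpermM r r ab; rewrite footrulexx.
have : r a != r b by rewrite (inj_eq perm_inj).
rewrite -val_eqE /distn /=; lia.
Qed.

End Footrule.

Section MallowsPmf.

Context {R : realType} {n : nat} {rho : {perm 'I_n}} {alpha : R}.
Hypothesis alpha_gt0 : 0 < alpha.
Implicit Types (r s : {perm 'I_n}).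

Lemma mallows_Z_gt0 : 0 < mallows_Z rho alpha.
Proof.
rewrite /mallows_Z (bigD1 1%g) //= ltr_pwDl ?expR_gt0 //.
by apply: sumr_ge0 => r _; rewrite /mallows_weight expR_ge0.
Qed.

Lemma mallows_pmf_le r s : (footrule r rho <= footrule s rho)%N ->
  mallows_pmf rho alpha s <= mallows_pmf rho alpha r.
Proof.
move=> le_rs; rewrite /mallows_pmf ler_pM2r ?invr_gt0 ?mallows_Z_gt0 //.
rewrite /mallows_weight ler_expR !mulNr lerN2 ler_wpM2l ?ler_nat //.
by rewrite divr_ge0 ?ler0n ?ltW.
Qed.

Lemma mallows_pmf_lt r s : (0 < n)%N -> (footrule r rho < footrule s rho)%N ->
  mallows_pmf rho alpha s < mallows_pmf rho alpha r.
Proof.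
move=> n_gt0 lt_rs; rewrite /mallows_pmf ltr_pM2r ?invr_gt0 ?mallows_Z_gt0 //.
rewrite /mallows_weight ltr_expR !mulNr ltrN2 ltr_pM2l ?ltr_nat //.
by rewrite divr_gt0 ?ltr0n.
Qed.

Lemma expected_rankB (a b : 'I_n) :
  expected_rank rho alpha b - expected_rank rho alpha a =
  \sum_(r : {perm 'I_n}) ((r b)%:R - (r a)%:R) * mallows_pmf rho alpha r.
Proof.
rewrite /expected_rank -sumrB; apply: eq_bigr => r _.
by rewrite -mulrBl -!natr1 opprD addrACA subrr addr0.
Qed.

End MallowsPmf.

Lemma sum_pairing {R : pzRingType} {T : finGroupType} {t : T} {h : T -> R}
  (w : T -> R) :
  (forall x, h (t * x)%g = - h x) ->
  (\sum_x h x * w x) *+ 2 = \sum_x h x * (w x - w (t * x)%g).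
Proof.
move=> h_anti; rewrite mulr2n {2}(reindex_inj (mulgI t)) /=.
under [RHS]eq_bigr do rewrite mulrBr.
rewrite sumrB -sumrN; congr (_ + _).
by apply: eq_bigr => x _; rewrite h_anti mulNr.
Qed.

Lemma expected_rank_lt (R : realType) (n : nat) (rho : {perm 'I_n}) (alpha : R)
  (a b : 'I_n) : 0 < alpha -> (rho a < rho b)%N ->
  expected_rank rho alpha a < expected_rank rho alpha b.
Proof.
move=> alpha_gt0 lt_ab.
have ab : a != b by apply: contraTneq lt_ab => ->; rewrite ltnn.
set t := tperm a b; set p := mallows_pmf rho alpha.
set h := fun r : {perm 'I_n} => (r b)%:R - (r a)%:R : R.
have h_anti r : h (t * r)%g = - h r by rewrite /h !permM tpermL tpermR opprB.
have le_rho : (rho a <= rho b)%N := ltnW lt_ab.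
have term_ge0 r : 0 <= h r * (p r - p (t * r)%g).
  have [le_r|lt_r] := leqP (r a) (r b).
    apply: mulr_ge0; first by rewrite subr_ge0 ler_nat.
    rewrite /p subr_ge0; apply: (mallows_pmf_le alpha_gt0).
    exact: footrule_tpermM_sorted.
  apply: mulr_le0; first by rewrite subr_le0 ler_nat ltnW.
  rewrite /p subr_le0; apply: (mallows_pmf_le alpha_gt0).
  have {2}-> : r = (t * (t * r))%g by rewrite mulgA tperm2 mul1g.
  by apply: footrule_tpermM_sorted; rewrite // !permM tpermL tpermR ltnW.
have term_rho_gt0 : 0 < h rho * (p rho - p (t * rho)%g).
  apply: mulr_gt0; first by rewrite subr_gt0 ltr_nat.
  rewrite /p subr_gt0; apply: (mallows_pmf_lt alpha_gt0).
    exact: leq_ltn_trans (leq0n a) (ltn_ord a).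
  by rewrite footrulexx footrule_tpermM_gt0.
rewrite -subr_gt0 expected_rankB -(pmulrn_lgt0 _ (ltn0Sn 1)) (sum_pairing _ h_anti).
rewrite (bigD1 rho) //= ltr_wpDr //; exact: sumr_ge0.
Qed.

Theorem lemma1 (R : realType) (n : nat) (hn : (2 <= n)%N)
  (rho0 : {perm 'I_n}) (alpha : R) (halpha : 0 < alpha)
  (j k : 'I_n) (hjk : val k = (val j).+1) :
  expected_rank rho0 alpha (item_of_rank rho0 j) <
  expected_rank rho0 alpha (item_of_rank rho0 k).
Proof.
by apply: expected_rank_lt => //; rewrite /item_of_rank !permKV hjk.
Qed.
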